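(* Let $\sigma$ be a term ordering on $\mathbb{T}^n$, let $F\subseteq\mathbb{Q}[x_1,\dots,x_n]$ be a set of non-zero polynomials, and let $G_\sigma$ be the reduced $\sigma$-Gröbner basis of the ideal $\langle F\rangle$. Then a prime number $p$ is $\sigma$-Pauer-lucky for $\operatorname{prim}(G_\sigma)$ if and only if $p$ is $\sigma$-good for $\langle F\rangle$.
   Context: $\mathbb{T}^n$ is the monoid of power-products in $x_1,\dots,x_n$; $\mathrm{LC}_\sigma$, $\mathrm{LM}_\sigma$ denote leading coefficient and leading monomial. For $f\in\mathbb{Q}[x_1,\dots,x_n]$, $\operatorname{den}(f)$ is the positive lcm of the denominators of its coefficients; $\operatorname{den}(G)$ is the lcm of $\operatorname{den}(g)$, $g\in G$. A prime $p$ is $\sigma$-good for an ideal $I$ with reduced $\sigma$-Gröbner basis $G_\sigma$ if $p\nmid\operatorname{den}(G_\sigma)$. For non-zero $f$, with $c$ the integer content of $f\cdot\operatorname{den}(f)$, $\operatorname{prim}(f)=c^{-1}f\cdot\operatorname{den}(f)\in\mathbb{Z}[x_1,\dots,x_n]$ and $\operatorname{prim}(G)=\{\operatorname{prim}(g):g\in G\}$. Non-zero $g_1,\dots,g_s\in\mathbb{Z}[x_1,\dots,x_n]$ form a strong $\sigma$-Gröbner basis of $\langle g_1,\dots,g_s\rangle$ if for every non-zero $f$ in this ideal some $\mathrm{LM}_\sigma(g_i)$ divides $\mathrm{LM}_\sigma(f)$; it is minimal if moreover $\mathrm{LM}_\sigma(g_i)\nmid\mathrm{LM}_\sigma(g_j)$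 for $i\neq j$. Given a set $F'$ of non-zero polynomials in $\mathbb{Z}[x_1,\dots,x_n]$ and a minimal strong $\sigma$-Gröbner basis $\tilde G$ of $\langle F'\rangle\subseteq\mathbb{Z}[x_1,\dots,x_n]$, a prime $p$ is $\sigma$-Pauer-lucky for $F'$ if $p$ divides the leading coefficient of no polynomial in $\tilde G$ (this does not depend on the choice of $\tilde G$). *)

From HB Require Import structures.
From mathcomp Require Import all_boot all_order all_algebra.
From mathcomp Require Import mpoly.

Set Implicit Arguments.
Unset Strict Implicit.
Unset Printing Implicit Defensive.

Import Order.TTheory GRing.Theory Num.Theory.
Local Open Scope ring_scope.

Section GB.
Variable n : nat.

(* Power products T^n are the multinomials 'X_{1..n}; product is (+)%MM,
   divisibility is (<=)%MM, the empty product 1 is 0%MM. *)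

Definition is_term_ordering (sigma : rel 'X_{1..n}) : Prop :=
  [/\ reflexive sigma, antisymmetric sigma, transitive sigma & total sigma]
  /\ ((forall t1 t2 t3, sigma t1 t2 -> sigma (t1 + t3)%MM (t2 + t3)%MM)
    /\ (forall t, sigma 0%MM t)).

Section Leading.
Variable R : ringType.
Variable sigma : rel 'X_{1..n}.

Definition LT (f : {mpoly R[n]}) : 'X_{1..n} :=
  foldr (fun t acc => if sigma acc t then t else acc)
        (head 0%MM (msupp f)) (msupp f).

Definition LC (f : {mpoly R[n]}) : R := f@_(LT f).

Definition LM (f : {mpoly R[n]}) : {mpoly R[n]} := LC f *: 'X_[LT f].
End Leading.

Definition in_ideal (R : comRingType) (F : seq {mpoly R[n]}) (f : {mpoly R[n]})
  : Prop :=
  exists cs : seq {mpoly R[n]},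
    size cs = size F /\ f = \sum_(i < size F) cs`_i * F`_i.

Definition pdvd (R : comRingType) (a b : {mpoly R[n]}) : Prop :=
  exists q : {mpoly R[n]}, b = q * a.

Definition is_GB (sigma : rel 'X_{1..n}) (F G : seq {mpoly rat[n]}) : Prop :=
  (forall g, g \in G -> g != 0 /\ in_ideal F g) /\
  (forall f, in_ideal F f -> f != 0 ->
     exists2 g, g \in G & (LT sigma g <= LT sigma f)%MM).

Definition is_reduced_GB (sigma : rel 'X_{1..n}) (F G : seq {mpoly rat[n]})
  : Prop :=
  [/\ is_GB sigma F G,
      (forall g, g \in G -> LC sigma g = 1)
    & (forall g g', g \in G -> g' \in G -> g != g' ->
         forall t, t \in msupp g -> ~~ (LT sigma g' <= t)%MM)].

Definition den (f : {mpoly rat[n]}) : nat :=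
  \big[lcmn/1%N]_(t <- msupp f) `|denq f@_t|%N.

Definition denG (G : seq {mpoly rat[n]}) : nat :=
  \big[lcmn/1%N]_(g <- G) den g.

(* p is sigma-good for the ideal whose reduced sigma-GB is G *)
Definition sigma_good (p : nat) (G : seq {mpoly rat[n]}) : Prop :=
  ~~ (p %| denG G)%N.

Definition scaled (f : {mpoly rat[n]}) (t : 'X_{1..n}) : int :=
  numq (f@_t * (den f)%:R).

Definition content (f : {mpoly rat[n]}) : nat :=
  \big[gcdn/0%N]_(t <- msupp f) `|scaled f t|%N.

Definition prim (f : {mpoly rat[n]}) : {mpoly int[n]} :=
  \sum_(t <- msupp f) (scaled f t %/ (content f)%:Z)%Z *: 'X_[t].

Definition primG (G : seq {mpoly rat[n]}) : seq {mpoly int[n]} := map prim G.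

Definition is_min_strong_GB (sigma : rel 'X_{1..n})
  (F' Gt : seq {mpoly int[n]}) : Prop :=
  [/\ (forall g, g \in Gt -> g != 0 /\ in_ideal F' g),
      (forall f, in_ideal Gt f <-> in_ideal F' f),
      (forall f, in_ideal F' f -> f != 0 ->
         exists2 g, g \in Gt & pdvd (LM sigma g) (LM sigma f))
    & (forall i j, (i < size Gt)%N -> (j < size Gt)%N -> i != j ->
         ~ pdvd (LM sigma Gt`_i) (LM sigma Gt`_j))].

Definition pauer_lucky (sigma : rel 'X_{1..n}) (p : nat)
  (F' : seq {mpoly int[n]}) : Prop :=
  exists Gt, is_min_strong_GB sigma F' Gt /\
    (forall g, g \in Gt -> ~~ ((p%:Z) %| LC sigma g)%Z).

End GB.

(* Let I be the ideal of Z[x] generated by prim(G) and D = den(G).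

   If p does not divide D: for a non-zero f in I, an element g of G with
   LT(g) | LT(f), made primitive and shifted, lies in I and its leading
   coefficient divides D; a Bezout combination with f gives an element of I
   with leading term LT(f) whose leading coefficient e divides both D and
   LC(f).  For each divisor e of D, Dickson's lemma yields finitely many such
   elements covering all their leading terms; the divisibility-minimal ones
   form a minimal strong Groebner basis of I with leading coefficients
   dividing D, hence prime to p.

   Conversely, let a minimal strong basis have leading coefficients prime to
   p, and suppose p | D.  Take g in G, sigma-minimal with a coefficient that
   is not p-integral.  The basis element b whose leading monomial divides that
   of prim(g), shifted to leading term LT(g) and divided by LC(b), is an
   h in <F> with p-integral coefficients, LT(h) = LT(g) and LC(h) = 1.
   Reducing h - g modulo the monic, p-integral elements of G below g never
   creates a denominator divisible by p, and leaves its G-normal part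
   X^LT(g) - g untouched because G is reduced; so g is p-integral after all. *)

From HB Require Import structures.
From mathcomp Require Import all_boot all_order all_algebra.
From mathcomp Require Import mpoly.
From Stdlib Require Import Classical ClassicalEpsilon.

Set Implicit Arguments.
Unset Strict Implicit.
Unset Printing Implicit Defensive.
Import Order.TTheory GRing.Theory Num.Theory.

Lemma nat_seq_min_after (c : nat -> nat) j :
  exists k, j < k /\ forall k', j < k' -> c k <= c k'.
Proof.
suff: forall v k, j < k -> c k <= v ->
    exists k, j < k /\ forall k', j < k' -> c k <= c k'.
  by apply=> //; apply: ltnSn.
elim=> [|v IH] k jk ck.
  by exists k; split=> // k' _; move: ck; rewrite leqn0 => /eqP->.
case: (classic (exists k', j < k' /\ c k' < c k)) => [[k' [jk' lt]]|nok].
  by apply: (IH k') => //; rewrite -ltnS (leq_trans lt ck).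
exists k; split=> // k' jk'; rewrite leqNgt; apply/negP=> lt; apply: nok.
by exists k'.
Qed.

Lemma nat_seq_nondecreasing_subseq (c : nat -> nat) : exists phi : nat -> nat,
  {homo phi : i j / i < j} /\ {homo c \o phi : i j / i <= j}.
Proof.
have [next Hnext] := choice _ (nat_seq_min_after c).
exists (fun i => iter i.+1 next 0); split.
  apply: homo_ltn; first by move=> y x z; apply: ltn_trans.
  by move=> i; case: (Hnext (iter i.+1 next 0)).
apply: homo_leq => [|y x z|i /=]; [by []|exact: leq_trans|].
have [lt1 min1] := Hnext (iter i next 0); apply: min1.
by have [lt2 _] := Hnext (next (iter i next 0)); apply: ltn_trans lt2.
Qed.

Section Dickson.
Variable n : nat.

Lemma dickson_subseq (f : nat -> 'X_{1..n}) (s : seq 'I_n) :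
  exists phi : nat -> nat, {homo phi : i j / i < j} /\
    {in s, forall c, {homo (fun i => f (phi i) c) : i j / i <= j}}.
Proof.
elim: s => [|c s [phi [phi_mono f_mono]]]; first by exists id; split=> // c.
have [psi [psi_mono fc_mono]] :=
  nat_seq_nondecreasing_subseq (fun i => f (phi i) c).
exists (phi \o psi); split=> [i j ij|]; first by apply/phi_mono/psi_mono.
move=> c'; rewrite inE => /predU1P[->|c's] i j ij; first exact: fc_mono.
by apply: (f_mono c' c's); apply: ltnW_homo.
Qed.

Lemma dickson (f : nat -> 'X_{1..n}) : exists i j, i < j /\ (f i <= f j)%MM.
Proof.
have [phi [phi_mono f_mono]] := dickson_subseq f (enum 'I_n).
exists (phi 0), (phi 1); split; first exact: phi_mono.
by apply/mnm_lepP=> c; apply: (f_mono c) => //; rewrite mem_enum.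
Qed.

Lemma finite_basis (T : eqType) (P : T -> Prop) (lm : T -> 'X_{1..n}) :
  exists B : seq T, {in B, forall b, P b} /\
    forall x, P x -> exists2 b, b \in B & (lm b <= lm x)%MM.
Proof.
apply: NNPP => no_basis.
have new_elt (B : seq T) : exists x, {in B, forall b, P b} ->
    P x /\ {in B, forall b, ~~ (lm b <= lm x)%MM}.
  case: (classic {in B, forall b, P b}) => [BP|]; last first.
    by case: B => [|b B] nBP; [case: nBP | exists b].
  apply: NNPP => no_x; apply: no_basis; exists B; split=> // x Px.
  apply: NNPP => nb; apply: no_x; exists x => _; split=> // b bB.
  by apply/negP=> bx; apply: nb; exists b.
have [next Hnext] := choice _ new_elt.
pose L k := iter k (fun B => rcons B (next B)) [::].
have LP k : {in L k, forall b, P b}.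
  elim: k => [|k IH] b //=; rewrite mem_rcons inE => /predU1P[->|]; last exact: IH.
  by case: (Hnext _ IH).
have L_grows i j : i < j -> next (L i) \in L j.
  elim: j => // j IH; rewrite ltnS leq_eqVlt => /predU1P[->|lt] /=;
    by rewrite mem_rcons inE ?eqxx ?IH ?orbT.
have [i [j [ij le]]] := dickson (fun k => lm (next (L k))).
by case: (Hnext _ (LP j)) => _ /(_ _ (L_grows _ _ ij)); rewrite le.
Qed.

End Dickson.

Lemma wf_no_descending_chain (T : Type) (r : T -> T -> Prop) :
  (forall f : nat -> T, ~ forall k, r (f k.+1) (f k)) -> well_founded r.
Proof.
move=> no_chain x0; apply: NNPP => nacc0.
have step x : exists y, ~ Acc r x -> r y x /\ ~ Acc r y.
  case: (classic (Acc r x)) => [ax|nax]; first by exists x.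
  apply: NNPP => no_y; apply: nax; constructor=> y ryx.
  by apply: NNPP => nacc; apply: no_y; exists y.
have [next Hnext] := choice _ step.
have nacc k : ~ Acc r (iter k next x0).
  by elim: k => // k IH; case: (Hnext _ IH).
by apply: (no_chain (fun k => iter k next x0)) => k; case: (Hnext _ (nacc k)).
Qed.

Lemma wf_min (T U : Type) (r : U -> U -> Prop) (lm : T -> U) (P : T -> Prop) :
  well_founded r -> (exists x, P x) ->
  exists x, P x /\ forall y, r (lm y) (lm x) -> ~ P y.
Proof.
move=> wf_r [x Px]; move: {2}(lm x) (erefl (lm x)) => u; move: x Px.
elim/(well_founded_ind wf_r): u => u IH x Px xu.
case: (classic (exists y, r (lm y) u /\ P y)) => [[y [ryu Py]]|no].
  exact: (IH _ ryu y Py).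
by exists x; split=> // y; rewrite xu => ryu Py; apply: no; exists y.
Qed.

Lemma antichain_cover (T : eqType) (r : rel T) : reflexive r -> transitive r ->
  forall s : seq T, exists s', [/\ {subset s' <= s},
    {in s, forall x, exists2 y, y \in s' & r y x}, uniq s' &
    {in s' &, forall x y, x != y -> ~~ r x y}].
Proof.
move=> r_refl r_trans; elim=> [|x s [s' [sub cov us anti]]]; first by exists [::].
case: (boolP (has (r^~ x) s')) => [/hasP[y ys ryx]|nh].
  exists s'; split=> // [z /sub zs|z]; first by rewrite inE zs orbT.
  by rewrite inE => /predU1P[->|/cov]; first by exists y.
exists (x :: filter (predC (r x)) s'); split.
- move=> z; rewrite !inE mem_filter => /predU1P[->|/andP[_ /sub ->]];
    by rewrite ?eqxx ?orbT.
- move=> z; rewrite inE => /predU1P[->|/cov[y ys ryz]].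
    by exists x; rewrite ?inE ?eqxx.
  case: (boolP (r x y)) => rxy.
    by exists x; [rewrite inE eqxx | apply: r_trans ryz].
  by exists y; rewrite // inE mem_filter /= rxy ys orbT.
- by rewrite /= filter_uniq // andbT mem_filter /= r_refl.
- move=> a b; rewrite !inE !mem_filter /=.
  case/predU1P=> [->|/andP[nxa aS]]; case/predU1P=> [->|/andP[nxb bS]] ab //.
  + by rewrite eqxx in ab.
  + by apply/negP => rax; move/hasP: nh; apply; exists a.
  + exact: anti.
Qed.

Section TermOrder.
Variable n : nat.
Variable sigma : rel 'X_{1..n}.
Hypothesis sigma_to : is_term_ordering sigma.

Lemma to_refl : reflexive sigma. Proof. by case: sigma_to => [[]]. Qed.
Lemma to_anti : antisymmetric sigma. Proof. by case: sigma_to => [[]]. Qed.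
Lemma to_trans : transitive sigma. Proof. by case: sigma_to => [[]]. Qed.
Lemma to_total : total sigma. Proof. by case: sigma_to => [[]]. Qed.

Lemma to_addl u t1 t2 : sigma t1 t2 -> sigma (u + t1)%MM (u + t2)%MM.
Proof.
by case: sigma_to => _ [to_addr _]; rewrite ![(u + _)%MM]addmC; apply: to_addr.
Qed.

Lemma to_lem t1 t2 : (t1 <= t2)%MM -> sigma t1 t2.
Proof.
case: sigma_to => _ [_ to_ge0] le; rewrite -(submK le) -{1}(add0m t1).
by rewrite ![(_ + t1)%MM]addmC; apply: to_addl.
Qed.

Definition slt (a b : 'X_{1..n}) := (a != b) && sigma a b.

Lemma slt_le_trans a u t : sigma a u -> slt u t -> slt a t.
Proof.
move=> au /andP[ut st]; rewrite /slt (to_trans au st) andbT.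
by apply: contraNneq ut => at_; apply/eqP/to_anti; rewrite st -at_.
Qed.

Lemma slt_trans a u t : slt a u -> slt u t -> slt a t.
Proof. by move=> /andP[_ au]; apply: slt_le_trans. Qed.

Lemma slt_wf : well_founded slt.
Proof.
apply: wf_no_descending_chain => f desc.
have chain i j : i <= j -> sigma (f j) (f i).
  elim: j => [|j IH]; first by rewrite leqn0 => /eqP->; apply: to_refl.
  rewrite leq_eqVlt => /predU1P[->|/IH ji]; first exact: to_refl.
  by apply: to_trans ji; case/andP: (desc j).
have [i [j [ij le]]] := dickson f.
case/andP: (desc i) => /eqP ne lt; apply: ne; apply: to_anti; rewrite lt /=.
exact: to_trans (to_lem le) (chain _ _ ij).
Qed.

Section Leading.
Variable R : idomainType.
Implicit Types f g : {mpoly R[n]}.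
Local Open Scope ring_scope.

Lemma foldr_to_max x0 (s : seq 'X_{1..n}) :
  let m := foldr (fun t acc => if sigma acc t then t else acc) x0 s in
  m \in x0 :: s /\ {in x0 :: s, forall t, sigma t m}.
Proof.
elim: s => [|a s [IH1 IH2]] /=.
  by split=> [|t /[!inE] /eqP->]; rewrite ?inE ?to_refl.
set m := foldr _ x0 s in IH1 IH2 *.
case: ifP => am; split; rewrite ?inE ?eqxx ?orbT //.
- move=> t /[!inE] /or3P[/eqP->|/eqP->|ts]; rewrite ?to_refl //; apply: to_trans am;
    by apply: IH2; rewrite inE ?eqxx ?ts ?orbT.
- by move: IH1; rewrite !inE => /orP[]->; rewrite ?orbT.
- move=> t /[!inE] /or3P[/eqP->|/eqP->|ts]; last by apply: IH2; rewrite inE ts orbT.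
    by apply: IH2; rewrite inE eqxx.
  by have := to_total a m; rewrite am orbF.
Qed.

Lemma mcoeff_LT_neq0 f : f != 0 -> f@_(LT sigma f) != 0.
Proof.
rewrite -msupp_eq0 -mcoeff_msupp /LT; case: (msupp f) => // a s _.
have [+ _] := foldr_to_max a (a :: s).
by rewrite inE => /predU1P[->|//]; apply: mem_head.
Qed.

Lemma LT_max f m : f@_m != 0 -> sigma m (LT sigma f).
Proof.
rewrite -mcoeff_msupp /LT; case: (msupp f) => // a s ms.
by have [_ /(_ m)] := foldr_to_max a (a :: s); apply; rewrite inE ms orbT.
Qed.

Lemma LT_unique f m : f@_m != 0 -> (forall m', f@_m' != 0 -> sigma m' m) ->
  LT sigma f = m.
Proof.
move=> fm m_max; have f0 : f != 0 by apply: contraNneq fm => ->; rewrite mcoeff0.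
by apply: to_anti; rewrite m_max ?mcoeff_LT_neq0 ?LT_max.
Qed.

Lemma LC_eq0 f : (LC sigma f == 0) = (f == 0).
Proof.
apply/idP/idP => [|/eqP->]; last by rewrite /LC mcoeff0.
by apply: contraLR => /mcoeff_LT_neq0.
Qed.

Lemma mcoeffMX_if f u m :
  (f * 'X_[u])@_m = if (u <= m)%MM then f@_(m - u)%MM else 0.
Proof.
case: ifP => um; first by rewrite -{1}(submK um) addmC mcoeffMX.
apply/eqP; rewrite mcoeff_eq0 (perm_mem (msuppMX f u)).
by apply: contraFN um => /mapP[m' _ ->]; rewrite lem_addr.
Qed.

Lemma LT_mulX f u : f != 0 -> LT sigma (f * 'X_[u]) = (u + LT sigma f)%MM.
Proof.
move=> f0; apply: LT_unique => [|m]; first by rewrite mcoeffMX mcoeff_LT_neq0.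
rewrite mcoeffMX_if; case: ifP => [um /LT_max|_]; last by rewrite eqxx.
by move/(to_addl u); rewrite [X in sigma X _]addmC (submK um).
Qed.

Lemma LC_mulX f u : LC sigma (f * 'X_[u]) = LC sigma f.
Proof.
have [->|f0] := eqVneq f 0; first by rewrite mul0r.
by rewrite /LC LT_mulX // mcoeffMX.
Qed.

Lemma LT_scale c f : c != 0 -> LT sigma (c *: f) = LT sigma f.
Proof.
move=> c0; have [->|f0] := eqVneq f 0; first by rewrite scaler0.
apply: LT_unique => [|m]; first by rewrite mcoeffZ mulf_neq0 ?mcoeff_LT_neq0.
by rewrite mcoeffZ mulf_eq0 negb_or => /andP[_ /LT_max].
Qed.

Lemma LC_scale c f : c != 0 -> LC sigma (c *: f) = c * LC sigma f.
Proof. by move=> c0; rewrite /LC LT_scale // mcoeffZ. Qed.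

Lemma LT_shift f t : f != 0 -> (LT sigma f <= t)%MM ->
  LT sigma (f * 'X_[t - LT sigma f]) = t.
Proof. by move=> f0 le; rewrite LT_mulX // submK. Qed.

Lemma LT_lincomb_max a b f g m : LT sigma f = LT sigma g ->
  (a *: f + b *: g)@_m != 0 -> sigma m (LT sigma f).
Proof.
move=> fg; rewrite mcoeffD !mcoeffZ.
have [->|fm _] := eqVneq f@_m 0; last exact: LT_max.
by rewrite mulr0 add0r mulf_eq0 negb_or fg => /andP[_ /LT_max].
Qed.

Lemma LT_lincomb a b f g : LT sigma f = LT sigma g ->
  (a *: f + b *: g)@_(LT sigma f) != 0 -> LT sigma (a *: f + b *: g) = LT sigma f.
Proof. by move=> fg h0; apply: LT_unique => // m; apply: LT_lincomb_max. Qed.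

Lemma LT_sub_lt f g : LT sigma f = LT sigma g -> LC sigma f = LC sigma g ->
  f != g -> slt (LT sigma (f - g)) (LT sigma f).
Proof.
move=> fg lc; rewrite -subr_eq0 => fg0.
have le : sigma (LT sigma (f - g)) (LT sigma f).
  apply: (LT_lincomb_max (a := 1) (b := -1) fg).
  by rewrite scale1r scaleN1r mcoeff_LT_neq0.
rewrite /slt le andbT; apply: contraTneq (mcoeff_LT_neq0 fg0) => ->.
by rewrite mcoeffB -/(LC sigma f) fg -/(LC sigma g) lc subrr eqxx.
Qed.

Lemma pdvd_LM_le f g : f != 0 -> pdvd (LM sigma g) (LM sigma f) ->
  (LT sigma g <= LT sigma f)%MM /\ exists k, LC sigma f = k * LC sigma g.
Proof.
move=> f0 [q /(congr1 (mcoeff (LT sigma f)))].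
rewrite /LM -scalerAr !mcoeffZ mcoeffX eqxx mulr1 mcoeffMX_if.
case: ifP => [le ->|_]; last by move/eqP; rewrite mulr0 LC_eq0 (negbTE f0).
by split=> //; exists q@_(LT sigma f - LT sigma g)%MM; rewrite mulrC.
Qed.

Lemma pdvd_LM f g k : (LT sigma g <= LT sigma f)%MM ->
  LC sigma f = k * LC sigma g -> pdvd (LM sigma g) (LM sigma f).
Proof.
move=> le lc; exists (k *: 'X_[LT sigma f - LT sigma g]).
by rewrite /LM -scalerAr -scalerAl scalerA -mpolyXD submK // lc mulrC.
Qed.

End Leading.
End TermOrder.

Section Ideal.
Variables (n : nat) (R : comNzRingType).
Implicit Types (f g a b : {mpoly R[n]}) (F H : seq {mpoly R[n]}).
Local Open Scope ring_scope.

Lemma in_ideal0 F : in_ideal F 0.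
Proof.
exists (nseq (size F) 0); rewrite size_nseq; split=> //.
by rewrite big1 // => i _; rewrite nth_nseq if_same mul0r.
Qed.

Lemma in_idealD F a b : in_ideal F a -> in_ideal F b -> in_ideal F (a + b).
Proof.
move=> [ca [sa ->]] [cb [sb ->]].
exists (mkseq (fun i => ca`_i + cb`_i) (size F)); rewrite size_mkseq; split=> //.
by rewrite -big_split; apply: eq_bigr => i _; rewrite nth_mkseq // mulrDl.
Qed.

Lemma in_idealMl F q a : in_ideal F a -> in_ideal F (q * a).
Proof.
move=> [ca [sa ->]]; exists (map (fun c => q * c) ca); rewrite size_map.
by split=> //; rewrite mulr_sumr; apply: eq_bigr => i _; rewrite (nth_map 0) ?sa // mulrA.
Qed.

Lemma in_idealMr F q a : in_ideal F a -> in_ideal F (a * q).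
Proof. by rewrite mulrC; apply: in_idealMl. Qed.

Lemma in_idealZ F c a : in_ideal F a -> in_ideal F (c *: a).
Proof. by rewrite -mul_mpolyC; apply: in_idealMl. Qed.

Lemma in_idealB F a b : in_ideal F a -> in_ideal F b -> in_ideal F (a - b).
Proof. by move=> Ia Ib; rewrite -scaleN1r; apply/in_idealD/in_idealZ. Qed.

Lemma mem_in_ideal F f : f \in F -> in_ideal F f.
Proof.
move=> fF; exists (mkseq (fun i => (i == index f F)%:R) (size F)).
rewrite size_mkseq; split=> //; have iF : (index f F < size F)%N by rewrite index_mem.
rewrite (bigD1 (Ordinal iF)) //= nth_mkseq // eqxx mul1r nth_index //.
rewrite big1 ?addr0 // => i /eqP iF'; rewrite nth_mkseq //.
by case: eqP => [fi|]; [case: iF'; apply: val_inj | rewrite mul0r].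
Qed.

Lemma in_ideal_trans F H f : {in H, forall g, in_ideal F g} ->
  in_ideal H f -> in_ideal F f.
Proof.
move=> HF [cs [_ ->]]; elim/big_ind: _ => [|a b|i _]; first exact: in_ideal0.
  exact: in_idealD.
by apply/in_idealMl/HF/mem_nth.
Qed.

End Ideal.

Lemma in_ideal_map n (R S : comNzRingType)
    (phi : {rmorphism {mpoly R[n]} -> {mpoly S[n]}}) F f :
  in_ideal F f -> in_ideal (map phi F) (phi f).
Proof.
move=> [cs [sz ->]]; exists (map phi cs); rewrite !size_map; split=> //.
rewrite rmorph_sum; apply: eq_bigr => i _.
by rewrite rmorphM !(nth_map (0 : {mpoly R[n]})%R) ?sz.
Qed.

Section StrongBasis.
Variable n : nat.
Variable sigma : rel 'X_{1..n}.
Hypothesis sigma_to : is_term_ordering sigma.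
Local Open Scope ring_scope.

Lemma strong_basis_generates (R : idomainType) (F B : seq {mpoly R[n]}) :
  {in B, forall g, g != 0 /\ in_ideal F g} ->
  (forall f, in_ideal F f -> f != 0 ->
     exists2 g, g \in B & pdvd (LM sigma g) (LM sigma f)) ->
  forall f, in_ideal F f -> in_ideal B f.
Proof.
move=> BF strong f; move: {2}(LT sigma f) (erefl (LT sigma f)) => u.
elim/(well_founded_ind (slt_wf sigma_to)): u f => u IH f fu fF.
have [->|f0] := eqVneq f 0; first exact: in_ideal0.
have [g gB /(pdvd_LM_le sigma_to f0)[le [k lc]]] := strong f fF f0.
have [g0 gF] := BF g gB.
have k0 : k != 0 by apply: contraNneq f0 => k0; rewrite -(LC_eq0 sigma_to) lc k0 mul0r.
set q := k *: (g * 'X_[LT sigma f - LT sigma g]).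
have Lq : LT sigma q = LT sigma f by rewrite (LT_scale sigma_to) // (LT_shift sigma_to).
have Cq : LC sigma q = LC sigma f by rewrite (LC_scale sigma_to) // (LC_mulX sigma_to) lc.
have qB : in_ideal B q by apply/in_idealZ/in_idealMr/mem_in_ideal.
rewrite -(subrK q f); apply: in_idealD => //.
have [->|fq] := eqVneq f q; first by rewrite subrr; apply: in_ideal0.
apply: (IH _ _ _ erefl); last by apply/in_idealB/in_idealZ/in_idealMr.
by rewrite -fu; apply: LT_sub_lt.
Qed.

End StrongBasis.

Section BigLcm.
Variables (T : eqType) (F : T -> nat).

Lemma dvdn_biglcm_seq s x : x \in s -> (F x %| \big[lcmn/1%N]_(y <- s) F y)%N.
Proof. by move=> xs; rewrite (big_rem x) //= dvdn_lcml. Qed.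

Lemma biglcm_seq_gt0 s : (forall x, 0 < F x)%N -> (0 < \big[lcmn/1%N]_(y <- s) F y)%N.
Proof. by move=> F_gt0; elim/big_ind: _ => // a b a0 b0; rewrite lcmn_gt0 a0. Qed.

Lemma prime_dvd_biglcm_seq p s : prime p ->
  (p %| \big[lcmn/1%N]_(y <- s) F y)%N -> has (fun x => p %| F x)%N s.
Proof.
move=> pp; apply: contraLR; rewrite -all_predC => /allP pF.
rewrite big_seq; elim/big_ind: _ => [|a b pa pb|x /pF //].
  by rewrite dvdn1 neq_ltn (prime_gt1 pp) orbT.
apply: contra (_ : ~~ (p %| a * b)%N); last by rewrite Euclid_dvdM // negb_or pa.
by move/dvdn_trans; apply; rewrite dvdn_lcm dvdn_mulr ?dvdn_mull.
Qed.

Lemma dvdn_biggcd_seq s x : x \in s -> (\big[gcdn/0%N]_(y <- s) F y %| F x)%N.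
Proof. by move=> xs; rewrite (big_rem x) //= dvdn_gcdl. Qed.

End BigLcm.

Section PIntegral.
Local Open Scope ring_scope.
Variable p : nat.
Hypothesis p_pr : prime p.

Definition p_integral (x : rat) := ~~ (p %| `|denq x|)%N.

Lemma denq_dvd (x : rat) (k : int) : x * k%:~R \is a Num.int -> (denq x %| k)%Z.
Proof.
move=> xk; have E : numq x * k = numq (x * k%:~R) * denq x.
  by apply/eqP; rewrite -(eqr_int rat) !intrM (numqK xk) numqE mulrAC.
have : (denq x %| numq x * k)%Z by rewrite E dvdz_mull.
by rewrite Gauss_dvdzr // coprimezE coprime_sym coprime_num_den.
Qed.

Lemma p_integralP x : p_integral x <->
  exists k : int, ~~ (p %| `|k|)%N /\ x * k%:~R \is a Num.int.
Proof.
split=> [px|[k [pk xk]]]; first by exists (denq x); rewrite -numqE rpred_int.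
by apply: contra pk => /dvdn_trans; apply; rewrite -dvdzE denq_dvd.
Qed.

Lemma p_integral_int (z : int) : p_integral z%:~R.
Proof. by rewrite /p_integral denq_int dvdn1 neq_ltn (prime_gt1 p_pr) orbT. Qed.

Lemma p_integralM x y : p_integral x -> p_integral y -> p_integral (x * y).
Proof.
move=> /p_integralP[kx [px xk]] /p_integralP[ky [py yk]]; apply/p_integralP.
exists (kx * ky); rewrite abszM Euclid_dvdM // negb_or px py intrM mulrACA.
by split=> //; apply: rpredM.
Qed.

Lemma p_integralD x y : p_integral x -> p_integral y -> p_integral (x + y).
Proof.
move=> /p_integralP[kx [px xk]] /p_integralP[ky [py yk]]; apply/p_integralP.
exists (kx * ky); rewrite abszM Euclid_dvdM // negb_or px py intrM mulrDl.
by split=> //; rewrite mulrA mulrCA; apply: rpredD; apply: rpredM; rewrite ?rpred_int.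
Qed.

Lemma p_integralN x : p_integral x -> p_integral (- x).
Proof. by rewrite /p_integral denqN. Qed.

Lemma p_integralB x y : p_integral x -> p_integral y -> p_integral (x - y).
Proof. by move=> px /p_integralN; apply: p_integralD. Qed.

Lemma p_integralV (z : int) : ~~ (p %| `|z|)%N -> p_integral (z%:~R)^-1.
Proof.
move=> pz; apply/p_integralP; exists z; split=> //.
have [->|z0] := eqVneq z 0; first by rewrite mulr0 rpred0.
by rewrite mulVf ?intr_eq0 ?rpred1.
Qed.

Variable n : nat.
Implicit Types f g : {mpoly rat[n]}.

Definition p_integral_mpoly f := forall m, p_integral f@_m.

Lemma p_integral_mpolyX t : p_integral_mpoly 'X_[t].
Proof.
move=> m; rewrite mcoeffX.
by case: eqP => _; [exact: (p_integral_int 1) | exact: (p_integral_int 0)].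
Qed.

Lemma p_integral_mpolyB f g :
  p_integral_mpoly f -> p_integral_mpoly g -> p_integral_mpoly (f - g).
Proof. by move=> pf pg m; rewrite mcoeffB; apply: p_integralB. Qed.

Lemma p_integral_mpoly_shift c f u : p_integral c -> p_integral_mpoly f ->
  p_integral_mpoly (c *: (f * 'X_[u])).
Proof.
move=> pc pf m; rewrite mcoeffZ mcoeffMX_if; apply: p_integralM => //.
by case: ifP => // _; apply: (p_integral_int 0).
Qed.

Lemma den_gt0 f : (0 < den f)%N.
Proof. by apply: biglcm_seq_gt0 => t; rewrite absz_gt0 denq_neq0. Qed.

Lemma denq_dvd_den f t : (`|denq f@_t| %| den f)%N.
Proof.
have [->|ft] := eqVneq f@_t 0; first by rewrite (denq_int 0).
by apply: dvdn_biglcm_seq; rewrite mcoeff_msupp.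
Qed.

Lemma p_integral_mpolyP f : ~~ (p %| den f)%N <-> p_integral_mpoly f.
Proof.
split=> [pf t|pf]; first by apply: contra pf => /dvdn_trans; apply; apply: denq_dvd_den.
by apply/negP => /(prime_dvd_biglcm_seq p_pr) /hasP[t _]; apply/negP/pf.
Qed.

End PIntegral.

Section Primitive.
Variable n : nat.
Local Open Scope ring_scope.
Implicit Types g : {mpoly rat[n]}.

Definition mpoly_rat (f : {mpoly int[n]}) : {mpoly rat[n]} := map_mpoly intr f.

Lemma mcoeff_mpoly_rat f m : (mpoly_rat f)@_m = (f@_m)%:~R.
Proof. exact: mcoeff_map_mpoly. Qed.

Lemma mpoly_rat_eq0 f : (mpoly_rat f == 0) = (f == 0).
Proof.
apply/eqP/eqP => [f0|->]; last exact: raddf0.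
apply/mpolyP => m; move/mpolyP/(_ m): f0.
by rewrite mcoeff_mpoly_rat !mcoeff0 => /eqP; rewrite intr_eq0 => /eqP.
Qed.

Lemma mcoeff_sum_scaleX (R : nzRingType) (s : seq 'X_{1..n}) (c : 'X_{1..n} -> R) m :
  uniq s -> (\sum_(t <- s) c t *: 'X_[t])@_m = if m \in s then c m else 0.
Proof.
elim: s => [|a s IH]; first by rewrite big_nil mcoeff0.
rewrite big_cons /= => /andP[aS us]; rewrite mcoeffD mcoeffZ mcoeffX IH // inE.
by have [<-|ne] := eqVneq a m; rewrite ?(negbTE aS) ?mulr1 ?addr0 ?mulr0 ?add0r.
Qed.

Lemma scaledE g t : (scaled g t)%:~R = g@_t * (den g)%:R.
Proof.
rewrite /scaled numqK // -[(den g)%:R]/((den g)%:Z%:~R).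
have /dvdzP[q ->] : (denq g@_t %| (den g)%:Z)%Z.
  by rewrite dvdzE denq_dvd_den.
by rewrite intrM mulrCA -numqE rpredM ?rpred_int.
Qed.

Lemma content_gt0 g : g != 0 -> (0 < content g)%N.
Proof.
rewrite -msupp_eq0 /content; case E: (msupp g) => [|t s] // _.
apply: (@dvdn_gt0 _ `|scaled g t|%N); last exact: dvdn_biggcd_seq (mem_head _ _).
rewrite absz_gt0 -(intr_eq0 rat) scaledE mulf_neq0 ?pnatr_eq0 -?lt0n ?den_gt0 //.
by rewrite -mcoeff_msupp E mem_head.
Qed.

Lemma mpoly_rat_prim g : g != 0 ->
  mpoly_rat (prim g) = ((den g)%:R / (content g)%:R) *: g.
Proof.
move=> g0; apply/mpolyP => m.
rewrite mcoeff_mpoly_rat /prim mcoeff_sum_scaleX ?msupp_uniq // mcoeffZ.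
case: ifP => [ms|/negbT]; last by rewrite mcoeff_msupp negbK => /eqP->; rewrite mulr0.
have c_dvd : ((content g)%:Z %| scaled g m)%Z by rewrite dvdzE dvdn_biggcd_seq.
have c0 : (content g)%:R != 0 :> rat by rewrite pnatr_eq0 -lt0n content_gt0.
apply: (mulIf c0); rewrite -[(content g)%:R]/((content g)%:Z%:~R) -intrM divzK //.
by rewrite scaledE mulrAC divfK // mulrC.
Qed.

Lemma prim_scale_neq0 g : g != 0 -> ((den g)%:R / (content g)%:R : rat) != 0.
Proof.
by move=> g0; apply: mulf_neq0; rewrite ?invr_eq0 pnatr_eq0 -lt0n ?den_gt0 ?content_gt0.
Qed.

Variable sigma : rel 'X_{1..n}.
Hypothesis sigma_to : is_term_ordering sigma.

Lemma prim_neq0 g : g != 0 -> prim g != 0.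
Proof.
by move=> g0; rewrite -mpoly_rat_eq0 mpoly_rat_prim // scaler_eq0 negb_or prim_scale_neq0.
Qed.

Lemma LT_mpoly_rat f : LT sigma (mpoly_rat f) = LT sigma f.
Proof.
have [->|f0] := eqVneq f 0; first by rewrite /mpoly_rat raddf0 /LT !msupp0.
apply: (LT_unique sigma_to) => [|m]; rewrite mcoeff_mpoly_rat intr_eq0.
  exact: (mcoeff_LT_neq0 sigma_to).
exact: (LT_max sigma_to).
Qed.

Lemma LC_mpoly_rat f : LC sigma (mpoly_rat f) = (LC sigma f)%:~R.
Proof. by rewrite /LC LT_mpoly_rat mcoeff_mpoly_rat. Qed.

Lemma LT_prim g : g != 0 -> LT sigma (prim g) = LT sigma g.
Proof.
move=> g0; rewrite -LT_mpoly_rat mpoly_rat_prim //.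
by rewrite (LT_scale sigma_to) ?prim_scale_neq0.
Qed.

Lemma LC_prim g : g != 0 ->
  (LC sigma (prim g))%:~R = (den g)%:R / (content g)%:R * LC sigma g.
Proof.
move=> g0; rewrite -LC_mpoly_rat mpoly_rat_prim //.
by rewrite (LC_scale sigma_to) ?prim_scale_neq0.
Qed.

End Primitive.

Section IntLeading.
Variable n : nat.
Variable sigma : rel 'X_{1..n}.
Hypothesis sigma_to : is_term_ordering sigma.
Local Open Scope ring_scope.
Implicit Types f g h : {mpoly int[n]}.

Definition lead_dvd g f :=
  (LT sigma g <= LT sigma f)%MM && (LC sigma g %| LC sigma f)%Z.

Lemma lead_dvd_refl : reflexive lead_dvd.
Proof. by move=> f; rewrite /lead_dvd lepm_refl dvdzz. Qed.

Lemma lead_dvd_trans : transitive lead_dvd.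
Proof.
move=> g f h /andP[le1 dv1] /andP[le2 dv2].
by rewrite /lead_dvd (lepm_trans le1 le2) (dvdz_trans dv1 dv2).
Qed.

Lemma pdvd_LMP f g : f != 0 -> pdvd (LM sigma g) (LM sigma f) <-> lead_dvd g f.
Proof.
move=> f0; split=> [/(pdvd_LM_le sigma_to f0)[le [k lc]]|/andP[le /dvdzP[k lc]]].
  by rewrite /lead_dvd le lc dvdz_mull.
exact: pdvd_LM lc.
Qed.

Lemma lead_gcd (I : seq {mpoly int[n]}) f g :
  in_ideal I f -> in_ideal I g -> f != 0 -> LT sigma f = LT sigma g ->
  exists h, [/\ in_ideal I h, LT sigma h = LT sigma f &
                LC sigma h = (gcdn `|LC sigma f| `|LC sigma g|)%:Z].
Proof.
move=> fI gI f0 fg; have [u [v uv]] := Bezoutz (LC sigma f) (LC sigma g).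
have lc : (u *: f + v *: g)@_(LT sigma f) = (gcdn `|LC sigma f| `|LC sigma g|)%:Z.
  by rewrite mcoeffD !mcoeffZ -/(LC sigma f) fg -/(LC sigma g) uv.
have h0 : (u *: f + v *: g)@_(LT sigma f) != 0.
  by rewrite lc eqz_nat -lt0n gcdn_gt0 absz_gt0 (LC_eq0 sigma_to) f0.
exists (u *: f + v *: g); rewrite /LC (LT_lincomb sigma_to) // lc.
by split=> //; apply: in_idealD; apply: in_idealZ.
Qed.

Lemma min_strong_GB_sub (I C : seq {mpoly int[n]}) :
  {in C, forall c, c != 0 /\ in_ideal I c} ->
  (forall f, in_ideal I f -> f != 0 -> exists2 c, c \in C & lead_dvd c f) ->
  exists2 B, is_min_strong_GB sigma I B & {subset B <= C}.
Proof.
move=> CI C_strong.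
have [B [BC cover uB anti]] := antichain_cover lead_dvd_refl lead_dvd_trans C.
have BI : {in B, forall b, b != 0 /\ in_ideal I b} by move=> b /BC /CI.
have B_strong f : in_ideal I f -> f != 0 ->
    exists2 b, b \in B & pdvd (LM sigma b) (LM sigma f).
  move=> fI f0; have [c cC cf] := C_strong f fI f0; have [b bB bc] := cover c cC.
  by exists b; rewrite // pdvd_LMP //; apply: lead_dvd_trans cf.
exists B => //; split=> // [f|i j iB jB ij].
  split; first by apply: in_ideal_trans => b /BI[].
  exact: (strong_basis_generates sigma_to BI B_strong).
have [Bj0 _] := BI _ (mem_nth 0 jB).
by rewrite pdvd_LMP //; apply/negP/anti; rewrite ?mem_nth ?nth_uniq.
Qed.

End IntLeading.

Section ReducedGB.
Variable n : nat.
Variable sigma : rel 'X_{1..n}.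
Hypothesis sigma_to : is_term_ordering sigma.
Variables F G : seq {mpoly rat[n]}.
Hypothesis G_red : is_reduced_GB sigma F G.
Local Open Scope ring_scope.
Local Notation LT := (LT sigma).
Local Notation LC := (LC sigma).

Lemma G_neq0 g : g \in G -> g != 0.
Proof. by case: G_red => [[GF _] _ _] /GF[]. Qed.

Lemma G_in_ideal g : g \in G -> in_ideal F g.
Proof. by case: G_red => [[GF _] _ _] /GF[]. Qed.

Lemma G_LC g : g \in G -> LC g = 1.
Proof. by case: G_red => _ G1 _ /G1. Qed.

Lemma G_lead f : in_ideal F f -> f != 0 -> exists2 g, g \in G & (LT g <= LT f)%MM.
Proof. by case: G_red => [[_ GB] _ _]; apply: GB. Qed.

Lemma in_ideal_primG f : in_ideal (primG G) f -> in_ideal F (mpoly_rat f).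
Proof.
move=> /(in_ideal_map (map_mpoly (intr : int -> rat))); apply: in_ideal_trans.
move=> _ /mapP[_ /mapP[g gG ->] ->]; change (in_ideal F (mpoly_rat (prim g))).
rewrite mpoly_rat_prim ?G_neq0 //.
exact/in_idealZ/G_in_ideal.
Qed.

Lemma prim_in_ideal g : g \in G -> in_ideal (primG G) (prim g).
Proof. by move=> gG; apply/mem_in_ideal/map_f. Qed.

Definition G_normal (b : {mpoly rat[n]}) :=
  forall m, b@_m != 0 -> {in G, forall g, ~~ (LT g <= m)%MM}.

Lemma G_normal_tail g : g \in G -> G_normal ('X_[LT g] - g).
Proof.
move=> gG m; rewrite mcoeffB mcoeffX; have [<-|tm] := eqVneq (LT g) m.
  by rewrite -/(LC g) G_LC // subrr eqxx.
rewrite sub0r oppr_eq0 => gm g' g'G; have [<-|gg'] := eqVneq g g'.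
  apply: contra tm => /(to_lem sigma_to) tm; apply/eqP/(to_anti sigma_to).
  by rewrite tm (LT_max sigma_to).
by case: G_red => _ _ red; apply: (red g) => //; rewrite mcoeff_msupp.
Qed.

Section PIntegrality.
Variable p : nat.
Hypothesis p_pr : prime p.
Local Notation p_integral_mpoly := (p_integral_mpoly p).

Lemma G_normal_p_integral t f a b :
  {in G, forall g, slt sigma (LT g) t -> p_integral_mpoly g} ->
  in_ideal F f -> (f != 0 -> slt sigma (LT f) t) -> f = a + b ->
  p_integral_mpoly a -> G_normal b -> p_integral_mpoly b.
Proof.
move=> small; move: {2}(LT f) (erefl (LT f)) => u.
elim/(well_founded_ind (slt_wf sigma_to)): u f a => u IH f a fu fF ft Ef pa nb.
have b_eq : b = f - a by rewrite Ef addrC addKr.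
have [f0|f0] := eqVneq f 0.
  rewrite b_eq f0; apply: p_integral_mpolyB => // m.
  by rewrite mcoeff0; apply: (p_integral_int _ 0).
have [g gG le] := G_lead fF f0.
have pg : p_integral_mpoly g.
  by apply: small => //; apply: slt_le_trans (to_lem sigma_to le) (ft f0).
set c := f@_(LT f).
have c0 : c != 0 by apply: mcoeff_LT_neq0.
have pc : p_integral p c.
  have bf : b@_(LT f) = 0 by apply: contraTeq le => /nb /(_ g gG).
  by rewrite /c (congr1 (mcoeff (LT f)) Ef) mcoeffD bf addr0.
set q := c *: (g * 'X_[LT f - LT g]).
have pq : p_integral_mpoly q by apply: p_integral_mpoly_shift.
have Lq : LT q = LT f by rewrite (LT_scale sigma_to) // (LT_shift sigma_to) ?G_neq0.
have Cq : LC q = LC f by rewrite (LC_scale sigma_to) // (LC_mulX sigma_to) G_LC ?mulr1.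
have [fq|fq] := eqVneq f q; first by rewrite b_eq fq; apply: p_integral_mpolyB.
have lt : slt sigma (LT (f - q)) (LT f) by apply: LT_sub_lt.
apply: (IH _ _ (f - q) (a - q) erefl) => //.
- by rewrite -fu.
- by apply/in_idealB/in_idealZ/in_idealMr/G_in_ideal.
- by move=> _; apply: slt_trans lt (ft f0).
- by rewrite Ef addrAC.
- exact: p_integral_mpolyB.
Qed.

Lemma G_p_integral_of_lift g h : g \in G ->
  {in G, forall g', slt sigma (LT g') (LT g) -> p_integral_mpoly g'} ->
  in_ideal F h -> p_integral_mpoly h -> LT h = LT g -> LC h = 1 ->
  p_integral_mpoly g.
Proof.
move=> gG small hF ph Lh Ch.
have pb : p_integral_mpoly ('X_[LT g] - g).
  apply: (G_normal_p_integral small (f := h - g) (a := h - 'X_[LT g])).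
  - exact/in_idealB/G_in_ideal.
  - by rewrite subr_eq0 -Lh => hg; apply: LT_sub_lt; rewrite // Ch G_LC.
  - by rewrite addrA subrK.
  - exact/p_integral_mpolyB/p_integral_mpolyX.
  - exact: G_normal_tail.
by rewrite -(subKr 'X_[LT g] g); apply/p_integral_mpolyB/pb/p_integral_mpolyX.
Qed.

Lemma ideal_primG_monic_lift f t :
  in_ideal (primG G) f -> f != 0 -> ~~ (p %| `|LC f|)%N -> (LT f <= t)%MM ->
  exists h, [/\ in_ideal F h, p_integral_mpoly h, LT h = t & LC h = 1].
Proof.
move=> fI f0 pf le; have fQ0 : mpoly_rat f != 0 by rewrite mpoly_rat_eq0.
have c0 : ((LC f)%:~R : rat) != 0 by rewrite intr_eq0 (LC_eq0 sigma_to).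
exists ((LC f)%:~R^-1 *: (mpoly_rat f * 'X_[t - LT f])); split.
- exact/in_idealZ/in_idealMr/in_ideal_primG.
- apply: p_integral_mpoly_shift => //; first exact: p_integralV.
  by move=> m; rewrite mcoeff_mpoly_rat; apply: p_integral_int.
- rewrite (LT_scale sigma_to) ?invr_eq0 // -(LT_mpoly_rat sigma_to).
  by rewrite (LT_shift sigma_to) ?LT_mpoly_rat.
- rewrite (LC_scale sigma_to) ?invr_eq0 // (LC_mulX sigma_to).
  by rewrite (LC_mpoly_rat sigma_to) mulVf.
Qed.

Lemma pauer_lucky_good : pauer_lucky sigma p (primG G) -> sigma_good p G.
Proof.
move=> [B [[BI _ B_strong _] B_LC]]; apply/negP.
move=> /(prime_dvd_biglcm_seq p_pr) /hasP[g0 g0G pg0].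
have bad0 : ~ p_integral_mpoly g0 by move/(p_integral_mpolyP p_pr)/negP.
have : exists g, g \in G /\ ~ p_integral_mpoly g by exists g0.
case/(wf_min LT (slt_wf sigma_to)) => g [[gG bad] g_min].
have [b bB /(pdvd_LM_le sigma_to (prim_neq0 (G_neq0 gG)))[le _]] :=
  B_strong _ (prim_in_ideal gG) (prim_neq0 (G_neq0 gG)).
have [b0 bI] := BI b bB.
have pb : ~~ (p %| `|LC b|)%N by have := B_LC b bB; rewrite dvdzE.
rewrite (LT_prim sigma_to) ?G_neq0 // in le.
have [h [hF ph Lh Ch]] := ideal_primG_monic_lift bI b0 pb le.
apply: bad; apply: (G_p_integral_of_lift gG) hF ph Lh Ch => g' g'G lt.
by apply: NNPP => bad'; apply: g_min lt (conj g'G bad').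
Qed.

End PIntegrality.

Lemma LC_prim_dvd_denG g : g \in G -> (`|LC (prim g)| %| denG G)%N.
Proof.
move=> gG; apply: dvdn_trans (dvdn_biglcm_seq _ gG).
have c0 : (content g)%:R != 0 :> rat by rewrite pnatr_eq0 -lt0n content_gt0 ?G_neq0.
have E : LC (prim g) * (content g)%:Z = (den g)%:Z.
  apply/eqP; rewrite -(eqr_int rat) intrM (LC_prim sigma_to) ?G_neq0 //.
  by rewrite G_LC // mulr1 divfK.
by rewrite -[den g]/`|(den g)%:Z|%N -E abszM dvdn_mulr.
Qed.

Lemma primG_lead_dvd_denG f : in_ideal (primG G) f -> f != 0 ->
  exists e, [/\ (e %| denG G)%N, (e%:Z %| LC f)%Z &
    exists h, [/\ in_ideal (primG G) h, LT h = LT f & LC h = e%:Z]].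
Proof.
move=> fI f0; have fQ0 : mpoly_rat f != 0 by rewrite mpoly_rat_eq0.
have [g gG] := G_lead (in_ideal_primG fI) fQ0.
have g0 := G_neq0 gG; have pg0 := prim_neq0 g0.
rewrite (LT_mpoly_rat sigma_to) -(LT_prim sigma_to g0) => le.
set h0 := prim g * 'X_[LT f - LT (prim g)].
have h0I : in_ideal (primG G) h0 by apply/in_idealMr/prim_in_ideal.
have Lh0 : LT h0 = LT f by rewrite (LT_shift sigma_to).
have [h [hI Lh Ch]] := lead_gcd sigma_to fI h0I f0 (esym Lh0).
exists (gcdn `|LC f| `|LC h0|); split; last by exists h.
  by apply: dvdn_trans (dvdn_gcdr _ _) _; rewrite (LC_mulX sigma_to) LC_prim_dvd_denG.
by rewrite dvdzE dvdn_gcdl.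
Qed.

Lemma primG_strong_basis : exists C : seq {mpoly int[n]},
  [/\ {in C, forall c, c != 0 /\ in_ideal (primG G) c},
      {in C, forall c, `|LC c| %| denG G}%N &
      forall f, in_ideal (primG G) f -> f != 0 ->
        exists2 c, c \in C & lead_dvd sigma c f].
Proof.
have D0 : (0 < denG G)%N by apply: biglcm_seq_gt0 => g; apply: den_gt0.
pose M e h := in_ideal (primG G) h /\ LC h = e%:Z.
have [B HB] := choice _ (fun e => finite_basis (M e) LT).
exists (flatten [seq B e | e <- divisors (denG G)]); split.
- move=> c /flattenP[_ /mapP[e eD ->] /(HB e).1[cI Cc]]; split=> //.
  by rewrite -(LC_eq0 sigma_to) Cc eqz_nat -lt0n (dvdn_gt0 D0) // dvdn_divisors.
- by move=> c /flattenP[_ /mapP[e eD ->] /(HB e).1[_ ->]]; rewrite dvdn_divisors.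
move=> f fI f0; have [e [eD ef [h [hI Lh Ch]]]] := primG_lead_dvd_denG fI f0.
have [b bB le] := (HB e).2 h (conj hI Ch); have [_ Cb] := (HB e).1 b bB.
exists b; last by rewrite /lead_dvd -Lh le Cb.
by apply/flattenP; exists (B e); rewrite // map_f // -dvdn_divisors.
Qed.

Lemma good_pauer_lucky p : sigma_good p G -> pauer_lucky sigma p (primG G).
Proof.
move=> good; have [C [CI C_den C_strong]] := primG_strong_basis.
have [B B_GB BC] := min_strong_GB_sub sigma_to CI C_strong.
exists B; split=> // b /BC /C_den bD; rewrite dvdzE.
by apply: contra good => /dvdn_trans; apply.
Qed.

End ReducedGB.

Theorem corollary3p19 (n : nat) (sigma : rel 'X_{1..n})
  (F G : seq {mpoly rat[n]}) (p : nat) :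
  is_term_ordering sigma ->
  (forall f, f \in F -> f != 0%R) ->
  is_reduced_GB sigma F G ->
  prime p ->
  pauer_lucky sigma p (primG G) <-> sigma_good p G.
Proof.
move=> sigma_to _ G_red p_pr; split.
  exact: (pauer_lucky_good sigma_to G_red p_pr).
exact: (good_pauer_lucky sigma_to G_red).
Qed.
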